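(* Let $\mathbf{r}_1,\mathbf{r}_2,\mathbf{s}_1,\mathbf{s}_2\in\mathbb{R}^2$ satisfy the nondegeneracy conditions $\mathbf{r}_1\cdot\mathbf{r}_2^{\perp}\neq 0$ and $\mathbf{s}_1\cdot\mathbf{s}_2^{\perp}\neq 0$. Suppose there exist $\lambda\in\mathbb{R}\setminus\{0\}$ and $(p_a^\star,q_a^\star),(p_b^\star,q_b^\star)\in\mathbb{Z}^2\setminus\{\mathbf{0}\}$ with $(p_a^\star,q_a^\star)\neq(p_b^\star,q_b^\star)$ such that $$p_a^\star\mathbf{r}_1+q_a^\star\mathbf{r}_2=(\lambda,0),\qquad p_b^\star\mathbf{s}_1+q_b^\star\mathbf{s}_2=(\lambda,0).$$ Let $(\hat{\mathbf{r}}_1,\hat{\mathbf{r}}_2)$ and $(\hat{\mathbf{s}}_1,\hat{\mathbf{s}}_2)$ be the reciprocal vectors of $(\mathbf{r}_1,\mathbf{r}_2)$ and $(\mathbf{s}_1,\mathbf{s}_2)$, respectively, and set $\hat{\mathbf{t}}_1=\hat{\mathbf{s}}_1-\hat{\mathbf{r}}_1$, $\hat{\mathbf{t}}_2=\hat{\mathbf{s}}_2-\hat{\mathbf{r}}_2$. Assume $\hat{\mathbf{t}}_1\cdot\hat{\mathbf{t}}_2^{\perp}\neq 0$, and let $(\mathbf{t}_1,\mathbf{t}_2)$ be the reciprocal vectors of $(\hat{\mathbf{t}}_1,\hat{\mathbf{t}}_2)$. Then $$(p_b^\star-p_a^\star)\,\mathbf{t}_1+(q_b^\star-q_a^\star)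\,\mathbf{t}_2=(\lambda,0).$$
   Context: For $\mathbf{u}=(u_1,u_2)\in\mathbb{R}^2$, $\mathbf{u}^\perp$ denotes its rotation by $90^\circ$, e.g. $\mathbf{u}^\perp=(-u_2,u_1)$, so $\mathbf{u}_1\cdot\mathbf{u}_2^\perp\neq 0$ means $\mathbf{u}_1,\mathbf{u}_2$ are linearly independent. For a linearly independent pair $(\mathbf{u}_1,\mathbf{u}_2)$ in $\mathbb{R}^2$, its reciprocal vectors are the unique pair $(\hat{\mathbf{u}}_1,\hat{\mathbf{u}}_2)$ in $\mathbb{R}^2$ with $\mathbf{u}_i\cdot\hat{\mathbf{u}}_j=\delta_{ij}$ for $i,j\in\{1,2\}$ (no factor $2\pi$). *)

From HB Require Import structures.
From mathcomp Require Import all_boot all_order all_algebra.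
From mathcomp Require Import reals.
Set Implicit Arguments. Unset Strict Implicit. Unset Printing Implicit Defensive.
Import Order.TTheory GRing.Theory Num.Theory.
Local Open Scope ring_scope.

Section Vec2.
Variable R : realType.

Definition dot2 (u v : R * R) : R := u.1 * v.1 + u.2 * v.2.

Definition perp2 (u : R * R) : R * R := (- u.2, u.1).

Definition add2 (u v : R * R) : R * R := (u.1 + v.1, u.2 + v.2).
Definition sub2 (u v : R * R) : R * R := (u.1 - v.1, u.2 - v.2).
Definition scale2 (a : R) (u : R * R) : R * R := (a * u.1, a * u.2).

(* (v1, v2) are the reciprocal vectors of (u1, u2): u_i . v_j = delta_ij
   (no factor 2 pi). *)
Definition reciprocal2 (u1 u2 v1 v2 : R * R) : Prop :=
  [/\ dot2 u1 v1 = 1, dot2 u1 v2 = 0, dot2 u2 v1 = 0 & dot2 u2 v2 = 1].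

End Vec2.

(* If p u1 + q u2 = w and (v1, v2) is reciprocal to (u1, u2), then p = w . v1
   and q = w . v2.  Hence p_a, q_a (resp. p_b, q_b) are the coordinates of
   (lambda, 0) against (hat r1, hat r2) (resp. (hat s1, hat s2)), so
   p_b - p_a, q_b - q_a are its coordinates against (hat t1, hat t2).  Since a
   left inverse of a 2x2 matrix is also a right inverse, the reciprocal pair
   (t1, t2) reconstructs every w as (w . hat t1) t1 + (w . hat t2) t2, which
   for w = (lambda, 0) is the claim. *)
From HB Require Import structures.
From mathcomp Require Import all_boot all_order all_algebra.
From mathcomp Require Import reals.
From mathcomp Require Import ring.
Import Order.TTheory GRing.Theory Num.Theory.
Local Open Scope ring_scope.

Section Reciprocal2.
Context {R : realType}.
Implicit Types (u v w : R * R) (p q : R).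

Lemma dot2_add2l u v w : dot2 (add2 u v) w = dot2 u w + dot2 v w.
Proof. by rewrite /dot2 /=; ring. Qed.

Lemma dot2_scale2l p u w : dot2 (scale2 p u) w = p * dot2 u w.
Proof. by rewrite /dot2 /=; ring. Qed.

Lemma dot2_sub2r w u v : dot2 w (sub2 u v) = dot2 w u - dot2 w v.
Proof. by rewrite /dot2 /=; ring. Qed.

Lemma reciprocal2_coords {u1 u2 v1 v2} p q :
  reciprocal2 u1 u2 v1 v2 ->
  dot2 (add2 (scale2 p u1) (scale2 q u2)) v1 = p /\
  dot2 (add2 (scale2 p u1) (scale2 q u2)) v2 = q.
Proof.
case=> e11 e12 e21 e22.
rewrite !dot2_add2l !dot2_scale2l e11 e12 e21 e22.
by split; ring.
Qed.

Lemma reciprocal2_expand u1 u2 v1 v2 w :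
  reciprocal2 u1 u2 v1 v2 ->
  add2 (scale2 (dot2 w u1) v1) (scale2 (dot2 w u2) v2) = w.
Proof.
case: u1 u2 v1 v2 w => [a b] [c d] [x1 y1] [x2 y2] [w1 w2].
rewrite /reciprocal2 /add2 /scale2 /dot2 /=.
case=> e11 e12 e21 e22.
(* (v1, v2) is the inverse of the matrix with rows u1, u2, hence its adjugate
   divided by the determinant; [det_v] plays the role of 1 / (a d - b c). *)
pose det_v := x1 * y2 - x2 * y1.
have Ex1 : x1 = d * det_v.
  have: x1 * (c * x2 + d * y2) - x2 * (c * x1 + d * y1) = d * det_v by rewrite /det_v; ring.
  by rewrite e21 e22 mulr1 mulr0 subr0.
have Ey1 : y1 = - c * det_v.
  have: y1 * (c * x2 + d * y2) - y2 * (c * x1 + d * y1) = - c * det_v by rewrite /det_v; ring.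
  by rewrite e21 e22 mulr1 mulr0 subr0.
have Ex2 : x2 = - b * det_v.
  have: x2 * (a * x1 + b * y1) - x1 * (a * x2 + b * y2) = - b * det_v by rewrite /det_v; ring.
  by rewrite e11 e12 mulr1 mulr0 subr0.
have Ey2 : y2 = a * det_v.
  have: y2 * (a * x1 + b * y1) - y1 * (a * x2 + b * y2) = a * det_v by rewrite /det_v; ring.
  by rewrite e11 e12 mulr1 mulr0 subr0.
have det_inv : (a * d - b * c) * det_v = 1.
  by rewrite -e11 Ex1 Ey1; ring.
rewrite Ex1 Ey1 Ex2 Ey2; congr pair.
- by transitivity (w1 * ((a * d - b * c) * det_v)); [ring | rewrite det_inv mulr1].
- by transitivity (w2 * ((a * d - b * c) * det_v)); [ring | rewrite det_inv mulr1].
Qed.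

End Reciprocal2.

Theorem theorem2 (R : realType)
  (r1 r2 s1 s2 : R * R)
  (hr : dot2 r1 (perp2 r2) != 0) (hs : dot2 s1 (perp2 s2) != 0)
  (lambda : R) (hlambda : lambda != 0)
  (pa qa pb qb : int)
  (ha0 : (pa, qa) != (0, 0)) (hb0 : (pb, qb) != (0, 0))
  (hab : (pa, qa) != (pb, qb))
  (hA : add2 (scale2 pa%:~R r1) (scale2 qa%:~R r2) = (lambda, 0))
  (hB : add2 (scale2 pb%:~R s1) (scale2 qb%:~R s2) = (lambda, 0))
  (rh1 rh2 sh1 sh2 : R * R)
  (hrh : reciprocal2 r1 r2 rh1 rh2) (hsh : reciprocal2 s1 s2 sh1 sh2)
  (ht : dot2 (sub2 sh1 rh1) (perp2 (sub2 sh2 rh2)) != 0)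
  (t1 t2 : R * R)
  (htt : reciprocal2 (sub2 sh1 rh1) (sub2 sh2 rh2) t1 t2) :
  add2 (scale2 (pb - pa)%:~R t1) (scale2 (qb - qa)%:~R t2) = (lambda, 0).
Proof.
have [pa_dot qa_dot] := reciprocal2_coords pa%:~R qa%:~R hrh.
have [pb_dot qb_dot] := reciprocal2_coords pb%:~R qb%:~R hsh.
rewrite hA in pa_dot qa_dot; rewrite hB in pb_dot qb_dot.
rewrite !rmorphB /= -pa_dot -qa_dot -pb_dot -qb_dot -!dot2_sub2r.
exact: reciprocal2_expand.
Qed.
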